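(* Consider Bertrand Competition with $n\ge 2$ firms, integer price floor $L\ge 2$ and integer reservation value $H>L$: each firm chooses an integer price in $\{L,\dots,H\}$; the firms choosing the lowest price $s$ split the sales equally, each such firm receiving $s/k$ where $k$ is the number of firms choosing $s$, and all other firms receive $0$. Cooperation means choosing $H$. Let $\beta\in[0,1]$ and $t\ge 0$, and define $f(n)=\sum_{k=0}^{n-1}\beta^k(1-\beta)^{n-1-k}\binom{n-1}{k}\frac{1}{n-k}$. Then cooperation for firm $i$ is consistent with type $(t,\beta)$ if and only if $$t\ \ge\ \max\big(\beta^{n-1}(H-1),\, f(n)L\big)-\beta^{n-1}H/n.$$
   Context: A pure strategy $s_i$ is consistent with a tolerance $t\ge 0$ and a mixed strategy profile $\sigma_{-i}$ of the other players if $u_i(s_i',\sigma_{-i})\le u_i(s_i,\sigma_{-i})+t$ for every pure strategy $s_i'$ of player $i$ (utilities extended by linearity). Cooperation is consistent with type $(t,\beta)$ for player $i$ if cooperation is consistent with $t$ and the profile $\sigma_{-i}$ in which each other firm independently plays $H$ (cooperation) with probability $\beta$ and $L$ (its Nash equilibrium action) with probability $1-\beta$. *)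

From HB Require Import structures.
From mathcomp Require Import all_boot all_order all_algebra.
Set Implicit Arguments. Unset Strict Implicit. Unset Printing Implicit Defensive.
Import Order.TTheory GRing.Theory Num.Theory.
Local Open Scope ring_scope.

(* Bertrand competition: n firms, prices are naturals p : 'I_H.+1 (so p <= H);
   the admissible prices are those with L <= p. A pure profile is
   s : {ffun 'I_n -> 'I_H.+1}. *)

Definition bertrand_u (R : realFieldType) (n H : nat) (i : 'I_n)
    (s : {ffun 'I_n -> 'I_H.+1}) : R :=
  if [forall j, (s i <= s j)%N]
  then (nat_of_ord (s i))%:R / (#|[set j | s j == s i]|)%:R
  else 0.

Arguments bertrand_u R {n H} i s.

Definition bertrand_EU (R : realFieldType) (n H : nat) (i : 'I_n)
    (p : 'I_H.+1) (sigma : 'I_n -> 'I_H.+1 -> R) : R :=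
  \sum_(s : {ffun 'I_n -> 'I_H.+1} | s i == p)
     (\prod_(j | j != i) sigma j (s j)) * bertrand_u R i s.

Definition consistent (R : realFieldType) (n L H : nat) (t : R) (i : 'I_n)
    (p : 'I_H.+1) (sigma : 'I_n -> 'I_H.+1 -> R) : Prop :=
  forall p' : 'I_H.+1, (L <= p')%N ->
    bertrand_EU i p' sigma <= bertrand_EU i p sigma + t.

Definition beta_profile (R : realFieldType) (n L H : nat) (beta : R)
    : 'I_n -> 'I_H.+1 -> R :=
  fun _ q => if nat_of_ord q == H then beta
             else if nat_of_ord q == L then 1 - beta else 0.

Definition coop_consistent (R : realFieldType) (n L H : nat) (i : 'I_n)
    (t beta : R) : Prop :=
  @consistent R n L H t i (@ord_max H) (@beta_profile R n L H beta).

Definition f_n (R : realFieldType) (n : nat) (beta : R) : R :=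
  \sum_(k < n) beta ^+ k * (1 - beta) ^+ (n.-1 - k) * ('C(n.-1, k))%:R
                 / (n - k)%:R.

(* Against opponents who cooperate with probability beta and otherwise play L,
   a profile is determined by the set T of cooperating opponents, of
   probability beta^|T| (1-beta)^(n-1-|T|). A price p with L < p <= H earns
   anything only if every opponent cooperates: p for p < H, H/n for p = H;
   the most profitable such deviation is H - 1, worth beta^(n-1) (H-1).
   Price L always earns L/(n-|T|), and summing over |T| gives f(n) L, which
   dominates beta^(n-1) L (this covers the case H - 1 = L). *)

From HB Require Import structures.
From mathcomp Require Import all_boot all_order all_algebra.
From mathcomp Require Import ring.
Import Order.TTheory GRing.Theory Num.Theory.
Local Open Scope ring_scope.

Lemma sum_subsets_by_card (V : nmodType) (T : finType) (A : {set T})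
    (F : nat -> V) :
  \sum_(B : {set T} | B \subset A) F #|B| = \sum_(k < #|A|.+1) F k *+ 'C(#|A|, k).
Proof.
rewrite (partition_big (fun B : {set T} => @inord #|A| #|B|) xpredT) //=.
apply: eq_bigr => k _; rewrite -cards_draws -sumr_const.
apply: eq_big => [B | B /andP[sBA /eqP <-]].
  rewrite inE; case sBA: (B \subset A) => //=.
  by rewrite -val_eqE /= inordK // ltnS subset_leq_card.
by rewrite inordK // ltnS subset_leq_card.
Qed.

Section BertrandPayoff.
Variables (R : realFieldType) (n H : nat) (i : 'I_n).
Implicit Type s : {ffun 'I_n -> 'I_H.+1}.

Lemma bertrand_u_undercut s j : (s j < s i)%N -> bertrand_u R i s = 0.
Proof.
by rewrite /bertrand_u ltnNge => /negbTE sij; case: forallP => // /(_ j); rewrite sij.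
Qed.

Lemma bertrand_u_lowest s : (forall j, s i <= s j)%N ->
  bertrand_u R i s = (s i)%:R / #|[set j | s j == s i]|%:R.
Proof. by rewrite /bertrand_u; case: forallP. Qed.

End BertrandPayoff.

Lemma f_n_ge (R : realFieldType) n (beta : R) :
  (0 < n)%N -> 0 <= beta -> beta <= 1 -> beta ^+ n.-1 <= f_n n beta.
Proof.
case: n => // n _ beta_ge0 beta_le1.
rewrite /f_n (bigD1 ord_max) //= subnn expr0 binn subSnn divr1 !mulr1 lerDl.
by apply: sumr_ge0 => k _; rewrite divr_ge0 ?mulr_ge0 ?exprn_ge0 ?subr_ge0.
Qed.

Section BetaProfile.
Variables (R : realFieldType) (n L H : nat) (i : 'I_n) (beta : R).
Hypothesis LH : (L < H)%N.

Local Notation profile := {ffun 'I_n -> 'I_H.+1}.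
Local Notation w := (@beta_profile R n L H beta).
Implicit Types (p : 'I_H.+1) (T : {set 'I_n}).

Lemma val_inord_L : (@inord H L : nat) = L.
Proof. by rewrite inordK // ltnS ltnW. Qed.

Lemma beta_profile_H j : w j ord_max = beta.
Proof. by rewrite /beta_profile eqxx. Qed.

Lemma beta_profile_L j (q : 'I_H.+1) : (q : nat) = L -> w j q = 1 - beta.
Proof. by move=> qL; rewrite /beta_profile qL ltn_eqF ?eqxx. Qed.

Lemma beta_profile_out j (q : 'I_H.+1) :
  (q : nat) != H -> (q : nat) != L -> w j q = 0.
Proof. by rewrite /beta_profile => /negbTE-> /negbTE->. Qed.

Definition split_profile (p : 'I_H.+1) (T : {set 'I_n}) : profile :=
  [ffun j => if j == i then p else if j \in T then ord_max else inord L].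

Lemma split_profile_self p T : split_profile p T i = p.
Proof. by rewrite ffunE eqxx. Qed.

Lemma split_profile_in p T j : j != i -> j \in T -> split_profile p T j = ord_max.
Proof. by rewrite ffunE => /negbTE-> ->. Qed.

Lemma split_profile_out p T j :
  j != i -> j \notin T -> (split_profile p T j : nat) = L.
Proof. by rewrite ffunE => /negbTE-> /negbTE->; rewrite val_inord_L. Qed.

Lemma prod_split_profile p T : i \notin T ->
  \prod_(j | j != i) w j (split_profile p T j)
    = beta ^+ #|T| * (1 - beta) ^+ (n.-1 - #|T|).
Proof.
move=> iNT; rewrite (bigID (mem T)) /=; congr (_ * _).
  rewrite -(prodr_const (mem T)); apply: eq_big => [j|j /andP[ji jT]].
    case: (boolP (j \in T)) => [jT|]; rewrite ?andbT ?andbF //.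
    by apply: contraNneq iNT => <-.
  by rewrite split_profile_in ?beta_profile_H.
have card_rest : #|~: (i |: T)| = (n.-1 - #|T|)%N.
  by rewrite cardsCs setCK cardsU1 iNT card_ord subnDA subn1.
rewrite -card_rest -prodr_const; apply: eq_big => [j|j /andP[ji jNT]].
  by rewrite !inE negb_or.
by rewrite beta_profile_L ?split_profile_out.
Qed.

(* Profiles in which an opponent plays outside {L, H} have weight zero; the
   others are determined by the set [T] of opponents playing [H]. *)
Lemma bertrand_EU_beta_profile p :
  bertrand_EU i p w = \sum_(T : {set 'I_n} | i \notin T)
    beta ^+ #|T| * (1 - beta) ^+ (n.-1 - #|T|) * bertrand_u R i (split_profile p T).
Proof.
pose two_point (s : profile) :=
  [forall j, (j != i) ==> ((s j : nat) == H) || ((s j : nat) == L)].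
pose high_set (s : profile) := [set j | (j != i) && ((s j : nat) == H)].
rewrite /bertrand_EU (bigID two_point) /= [X in _ + X]big1 ?addr0; last first.
  move=> s /andP[_ /forallPn[j]]; rewrite negb_imply negb_or => /and3P[ji sjH sjL].
  by rewrite (bigD1 j) //= beta_profile_out // !mul0r.
rewrite (reindex_onto (split_profile p) high_set) /=; last first.
  move=> s /andP[/eqP si /forallP two_s]; apply/ffunP => j; rewrite ffunE inE.
  case: eqVneq => [->|ji] //=; case: ifP => [/eqP sjH | /negbT sjNH].
    by apply: val_inj; rewrite /= sjH.
  apply: val_inj; rewrite /= val_inord_L.
  by move: (two_s j); rewrite ji (negbTE sjNH) => /eqP.
rewrite (eq_bigl (fun T => i \notin T)); last first.
  move=> T; rewrite split_profile_self eqxx /=.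
  have -> : two_point (split_profile p T).
    apply/forallP => j; apply/implyP => ji; case: (boolP (j \in T)) => jT.
      by rewrite split_profile_in ?eqxx.
    by rewrite split_profile_out ?eqxx ?orbT.
  have -> : high_set (split_profile p T) = T :\ i.
    apply/setP => j; rewrite !inE; case: eqVneq => //= ji.
    case: (boolP (j \in T)) => jT; first by rewrite split_profile_in ?eqxx.
    by rewrite split_profile_out ?ltn_eqF.
  apply/eqP/idP => [<-|iNT]; first by rewrite !inE eqxx.
  by apply/setP => j; rewrite !inE; case: eqVneq => // ->; rewrite (negbTE iNT).
by apply: eq_bigr => T iNT; rewrite prod_split_profile.
Qed.

Lemma bertrand_EU_above_low p : (L < p)%N ->
  bertrand_EU i p w = beta ^+ n.-1 * bertrand_u R i (split_profile p [set~ i]).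
Proof.
move=> Lp; rewrite bertrand_EU_beta_profile (bigD1 [set~ i]) ?inE ?eqxx //=.
rewrite big1 ?addr0; first by rewrite cardsC1 card_ord subnn expr0 mulr1.
move=> T /andP[iNT TneC].
have [j /andP[ji jNT]] : exists j, (j != i) && (j \notin T).
  apply/existsP; apply: contraNT TneC => /existsPn allT.
  apply/eqP/setP => j; rewrite !inE; case: eqVneq => [->|ji]; first exact: negbTE.
  by move: (allT j); rewrite ji negbK.
rewrite (@bertrand_u_undercut _ _ _ _ _ j) ?mulr0 //.
by rewrite split_profile_self split_profile_out.
Qed.

Lemma bertrand_EU_coop :
  bertrand_EU i ord_max w = beta ^+ n.-1 * H%:R / n%:R.
Proof.
have all_coop : split_profile ord_max [set~ i] = [ffun=> ord_max].
  apply/ffunP => j; rewrite [RHS]ffunE; case: (eqVneq j i) => [->|ji].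
    exact: split_profile_self.
  by rewrite split_profile_in ?inE.
rewrite bertrand_EU_above_low // all_coop bertrand_u_lowest => [|j]; last first.
  by rewrite !ffunE.
rewrite (_ : [set j | _] = setT); last by apply/setP => j; rewrite !inE !ffunE eqxx.
by rewrite cardsT card_ord ffunE mulrA.
Qed.

Lemma bertrand_EU_undercut p : (L < p < H)%N ->
  bertrand_EU i p w = beta ^+ n.-1 * (p : nat)%:R.
Proof.
move=> /andP[Lp pH].
rewrite bertrand_EU_above_low // bertrand_u_lowest split_profile_self.
  rewrite (_ : [set j | _] = [set i]) ?cards1 ?divr1 //.
  apply/setP => j; rewrite !inE; case: (eqVneq j i) => [->|ji].
    by rewrite split_profile_self eqxx.
  by rewrite split_profile_in ?inE // -val_eqE /= gtn_eqF.
move=> j; case: (eqVneq j i) => [->|ji]; first by rewrite split_profile_self.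
by rewrite split_profile_in ?inE // -ltnS.
Qed.

Lemma bertrand_u_split_low p T : (p : nat) = L -> i \notin T ->
  bertrand_u R i (split_profile p T) = L%:R / (n - #|T|)%:R.
Proof.
move=> pL iNT; rewrite bertrand_u_lowest split_profile_self pL; last first.
  move=> j; case: (eqVneq j i) => [->|ji].
    by rewrite split_profile_self pL.
  case: (boolP (j \in T)) => jT; first by rewrite split_profile_in // ltnW.
  by rewrite split_profile_out.
rewrite (_ : [set j | _] = ~: T); first by rewrite cardsCs setCK card_ord.
apply/setP => j; rewrite !inE; case: (eqVneq j i) => [->|ji].
  by rewrite split_profile_self eqxx iNT.
case: (boolP (j \in T)) => jT.
  by rewrite split_profile_in // -val_eqE /= pL gtn_eqF.
by rewrite -val_eqE /= split_profile_out // pL eqxx.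
Qed.

Lemma bertrand_EU_low p : (p : nat) = L ->
  bertrand_EU i p w = f_n n beta * L%:R.
Proof.
move=> pL; have n_gt0 : (0 < n)%N by apply: leq_ltn_trans (ltn_ord i).
rewrite bertrand_EU_beta_profile.
rewrite (eq_bigl (fun T => T \subset [set~ i])); last first.
  by move=> T; rewrite subsetC sub1set !inE.
pose F k := beta ^+ k * (1 - beta) ^+ (n.-1 - k) * (L%:R / (n - k)%:R).
rewrite (eq_bigr (fun T => F #|T|)); last first.
  by move=> T; rewrite subsetC sub1set inE => iNT; rewrite bertrand_u_split_low.
rewrite sum_subsets_by_card cardsC1 card_ord (prednK n_gt0) /f_n big_distrl /=.
by apply: eq_bigr => k _; rewrite /F -mulr_natr; ring.
Qed.

Lemma bertrand_EU_undercut_ge p : 0 <= beta -> beta <= 1 -> (L <= p < H)%N ->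
  beta ^+ n.-1 * (p : nat)%:R <= bertrand_EU i p w.
Proof.
move=> beta_ge0 beta_le1 /andP[]; rewrite leq_eqVlt => /orP[/eqP pL pH | Lp pH].
  rewrite bertrand_EU_low // -pL ler_wpM2r ?f_n_ge //.
  exact: leq_ltn_trans (ltn_ord i).
by rewrite bertrand_EU_undercut ?Lp.
Qed.

End BetaProfile.

Theorem proposition3p4 (R : realFieldType) (n L H : nat) (i : 'I_n)
    (beta t : R) :
  (2 <= n)%N -> (2 <= L)%N -> (L < H)%N ->
  0 <= beta -> beta <= 1 -> 0 <= t ->
  @coop_consistent R n L H i t beta <->
  t >= Num.max (beta ^+ n.-1 * (H%:R - 1)) (@f_n R n beta * L%:R)
         - beta ^+ n.-1 * H%:R / n%:R.
Proof.
move=> _ _ LH beta_ge0 beta_le1 t_ge0.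
rewrite /coop_consistent /consistent bertrand_EU_coop // lerBlDl ge_max.
have L_lt_SH : (L < H.+1)%N by rewrite ltnS ltnW.
have H_gt0 : (0 < H)%N by apply: leq_ltn_trans LH.
split=> [dev | /andP[dev_pred dev_low] p].
  apply/andP; split; last first.
    by rewrite -(@bertrand_EU_low _ _ _ _ i beta LH (inord L)) ?dev ?inordK.
  have predH_lt : (H.-1 < H.+1)%N by rewrite ltnS leq_pred.
  apply: le_trans (dev (inord H.-1) _); last by rewrite inordK // -ltnS prednK.
  rewrite -[H in H%:R - 1](prednK H_gt0) -natr1 addrK.
  rewrite -[X in X%:R](inordK predH_lt) bertrand_EU_undercut_ge // inordK //.
  by rewrite -ltnS prednK // LH leqnn.
rewrite leq_eqVlt => /orP[/eqP pL | Lp]; first by rewrite bertrand_EU_low.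
case: (ltngtP p H) => [pH | | pH]; last 2 first.
- by rewrite ltnNge -ltnS ltn_ord.
- by rewrite (_ : p = ord_max) ?bertrand_EU_coop ?lerDl //; apply: val_inj.
rewrite bertrand_EU_undercut ?Lp //; apply: le_trans dev_pred.
by rewrite ler_wpM2l ?exprn_ge0 // lerBrDr natr1 ler_nat.
Qed.
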